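(* Consider a mixture of two Bernoullis with the notation below, and let $T:=\{\boldsymbol\lambda: Z_1(\boldsymbol\lambda)<1\}$. The one-cluster regions $(\pi_1,\boldsymbol\mu_1,\boldsymbol\mu_2)$ with $\boldsymbol\lambda(\boldsymbol\mu_1)\in T$, $\boldsymbol\mu_2=\overline{\mathbf x}$ and $\pi_1=0$ are attractive for GD, given a small enough step size.
   Context: Model and data: - Let $B(\mathbf x\mid\boldsymbol\mu)=\prod_{i=1}^D\mu_i^{x_i}(1-\mu_i)^{1-x_i}$ for $\mathbf x\in\{0,1\}^D$ and $\boldsymbol\mu\in[0,1]^D$. - The true distribution is $p^*(\mathbf x)=\pi_1^*B(\mathbf x\mid\boldsymbol\mu_1^* )+\pi_2^*B(\mathbf x\mid\boldsymbol\mu_2^* )$ with $\pi_1^*\in(0,1)$ and $\pi_2^*=1-\pi_1^*$. - The model is $p(\mathbf x\mid\theta)=\pi_1B(\mathbf x\mid\boldsymbol\mu_1)+\pi_2B(\mathbf x\mid\boldsymbol\mu_2)$. Notation: - $\overline{\mathbf x}=\mathbb E_{p^*}[\mathbf x]$ and $S_i=\overline x_i(1-\overline x_i)$. - $\boldsymbol\mu^*=(\boldsymbol\mu_1^*-\boldsymbol\mu_2^* )/2$. - With $\mathbf b=\boldsymbol\mu_1-\overline{\mathbf x}$, define the affine map $\boldsymbol\lambda(\boldsymbol\mu_1)$ by $\lambda_i=2S_i^{-1}\mu_i^*b_i$. - $Z_1(\boldsymbol\lambda)=\pi_1^*\prod_{i=1}^D(1+\pi_2^*\lambda_i)+\pi_2^*\prod_{i=1}^D(1-\pi_1^*\lambda_i)$.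 This equals $\int p^*(\mathbf x)B(\mathbf x\mid\boldsymbol\mu_1)/B(\mathbf x\mid\overline{\mathbf x})$, the leading-order (as $\pi_1\to0$) value of $Z_1=\mathbb E_{p^*}[B(\mathbf x\mid\boldsymbol\mu_1)/p(\mathbf x\mid\theta)]$ when $\boldsymbol\mu_2=\overline{\mathbf x}$. GD: - GD is projected gradient ascent on $\mathbb E_{p^*}[\log p(\mathbf x\mid\theta)]$ with step size $\alpha$, with the mixing coefficients Euclidean-projected onto the simplex. - In this regime it updates $(\pi_1,\pi_2)\leftarrow(\pi_1+\tfrac\alpha2(Z_1-1),\pi_2-\tfrac\alpha2(Z_1-1))$ and $\boldsymbol\mu_2\leftarrow\boldsymbol\mu_2+\alpha\Sigma_2^{-1}(\overline{\mathbf x}-\boldsymbol\mu_2)$. - $\boldsymbol\mu_1$ moves by an amount proportional to $\pi_1$. Attractive means that GD initialized near such a configuration (with $\pi_1$ small) converges to a configuration with $\pi_1=0$. Standing assumption: $\sigma_{ij}=4\pi_1^*\pi_2^*\mu_i^*\mu_j^*\neq0$ for all $i\neq j$. *)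

From HB Require Import structures.
From mathcomp Require Import all_boot all_order all_algebra.
From mathcomp Require Import all_classical all_reals all_analysis.
Import Order.TTheory GRing.Theory Num.Theory.
Set Implicit Arguments. Unset Strict Implicit. Unset Printing Implicit Defensive.
Local Open Scope ring_scope.

Section BernMix.
Variables (R : realType) (D : nat).

Definition point := {ffun 'I_D -> bool}.

Definition bern (x : point) (mu : 'I_D -> R) : R :=
  \prod_(i < D) (if x i then mu i else 1 - mu i).

Definition pstar (pis : R) (mu1s mu2s : 'I_D -> R) (x : point) : R :=
  pis * bern x mu1s + (1 - pis) * bern x mu2s.

Definition pmodel (pi1 pi2 : R) (mu1 mu2 : 'I_D -> R) (x : point) : R :=
  pi1 * bern x mu1 + pi2 * bern x mu2.

Definition loglik (pis : R) (mu1s mu2s : 'I_D -> R)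
    (pi1 pi2 : R) (mu1 mu2 : 'I_D -> R) : R :=
  \sum_(x : point) pstar pis mu1s mu2s x * ln (pmodel pi1 pi2 mu1 mu2 x).

Definition xbar (pis : R) (mu1s mu2s : 'I_D -> R) (i : 'I_D) : R :=
  \sum_(x : point) pstar pis mu1s mu2s x * (x i)%:R.

Definition Svar (pis : R) (mu1s mu2s : 'I_D -> R) (i : 'I_D) : R :=
  xbar pis mu1s mu2s i * (1 - xbar pis mu1s mu2s i).

Definition mustar (mu1s mu2s : 'I_D -> R) (i : 'I_D) : R := (mu1s i - mu2s i) / 2.

Definition lambda (pis : R) (mu1s mu2s : 'I_D -> R) (mu1 : 'I_D -> R) (i : 'I_D) : R :=
  2 * (Svar pis mu1s mu2s i)^-1 * mustar mu1s mu2s i * (mu1 i - xbar pis mu1s mu2s i).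

Definition Z1lam (pis : R) (lam : 'I_D -> R) : R :=
  pis * \prod_(i < D) (1 + (1 - pis) * lam i)
  + (1 - pis) * \prod_(i < D) (1 - pis * lam i).

Definition setc (f : 'I_D -> R) (i : 'I_D) (t : R) : 'I_D -> R :=
  fun j => if j == i then t else f j.

(* Euclidean projection of (a, b) onto the simplex {(s,t) | s,t >= 0, s+t = 1};
   returns the first coordinate s (the second one is 1 - s). *)
Definition proj_simplex1 (a b : R) : R :=
  Num.max 0 (Num.min 1 ((a - b + 1) / 2)).

(* GD state: (pi1, mu1, mu2); pi2 = 1 - pi1 on the simplex *)
Definition state := (R * ('I_D -> R) * ('I_D -> R))%type.

(* One step of projected gradient ascent with step size alpha on
   loglik, where the gradient is taken w.r.t. (pi1, pi2, mu1, mu2) as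
   independent variables and (pi1, pi2) is projected onto the simplex. *)
Definition gd_step (pis : R) (mu1s mu2s : 'I_D -> R) (alpha : R) (th : state) : state :=
  let: (pi1, mu1, mu2) := th in
  let L := loglik pis mu1s mu2s in
  let pi2 := 1 - pi1 in
  let g1 := derive1 (fun t => L t pi2 mu1 mu2) pi1 in
  let g2 := derive1 (fun t => L pi1 t mu1 mu2) pi2 in
  let mu1' := fun i => mu1 i + alpha * derive1 (fun t => L pi1 pi2 (setc mu1 i t) mu2) (mu1 i) in
  let mu2' := fun i => mu2 i + alpha * derive1 (fun t => L pi1 pi2 mu1 (setc mu2 i t)) (mu2 i) in
  (proj_simplex1 (pi1 + alpha * g1) (pi2 + alpha * g2), mu1', mu2').

Definition gd_iter (pis : R) (mu1s mu2s : 'I_D -> R) (alpha : R) (n : nat) (th : state) : state :=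
  iter n (gd_step pis mu1s mu2s alpha) th.

End BernMix.

From Pilot Require Import Defs.
From HB Require Import structures.
From mathcomp Require Import all_boot all_order all_algebra.
From mathcomp Require Import all_classical all_reals all_analysis.
From mathcomp Require Import ring lra.
Set Implicit Arguments.
Unset Strict Implicit.
Unset Printing Implicit Defensive.
Import Order.TTheory GRing.Theory Num.Theory numFieldNormedType.Exports.
Local Open Scope classical_set_scope.
Local Open Scope ring_scope.

(* On the face pi1 = 0 with mu2 = xbar, the pi1-derivative of the expected
   log-likelihood minus its pi2-derivative equals Z1(lambda(mu1)) - 1, which is
   negative on T.  By continuity the gap stays negative near (0, mu1, xbar), so
   one projected step clips pi1 to 0.  On that face the mu1-gradient carries a
   factor pi1 and vanishes, so mu1 freezes, while mu2 moves by
   alpha (xbar - mu2) / (mu2 (1 - mu2)), a contraction towards xbar with factor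
   1 - 4 alpha.  The iterates therefore never leave the neighbourhood where
   these facts hold, and converge.  The assumption sigma_ij != 0 together with
   Z1 < 1 forces mu*_i != 0 for every i, hence 0 < xbar_i < 1. *)

Section DeriveSumLn.
Variable R : realType.

Lemma is_derive_sum_fun (I : finType) (h : I -> R -> R) (dh : I -> R) (t0 : R) :
  (forall i, is_derive t0 1 (h i) (dh i)) ->
  is_derive t0 1 (fun t => \sum_i h i t) (\sum_i dh i).
Proof.
move=> hd; rewrite -fct_sumE.
by elim/big_ind2 : _ => // *; [exact: is_derive_cst | exact: is_deriveD].
Qed.

Lemma is_derive_scale_ln_affine (c a b t0 : R) : 0 < a * t0 + b ->
  is_derive t0 1 (fun t => c * ln (a * t + b)) (c * (a / (a * t0 + b))).
Proof.
move=> hpos.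
have daff : is_derive t0 1 (fun t : R => a * t + b) a.
  by have := is_deriveD (is_deriveZ a (is_derive_id t0 1)) (is_derive_cst b t0 1);
     rewrite /GRing.scale /= mulr1 addr0.
have := is_deriveZ c (@is_derive1_comp R (@ln R) _ t0 _ _ (is_derive1_ln hpos) daff).
by rewrite /GRing.scale /= [a / _]mulrC.
Qed.

Lemma derive1_sum_scale_ln_affine (I : finType) (c a b : I -> R) (f : I -> R -> R) (t0 : R) :
  (forall i t, f i t = a i * t + b i) -> (forall i, 0 < f i t0) ->
  derive1 (fun t => \sum_i c i * ln (f i t)) t0 = \sum_i c i * (a i / f i t0).
Proof.
move=> hf hpos.
have hpos' i : 0 < a i * t0 + b i by rewrite -hf.
have -> : f = fun i t => a i * t + b i by apply/funext => i; apply/funext => t.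
have hd := is_derive_sum_fun (fun i => is_derive_scale_ln_affine (c i) (hpos' i)).
by rewrite derive1E derive_val.
Qed.
End DeriveSumLn.

Section Bernoulli.
Variables (R : realType) (D : nat).
Implicit Types (x : Defs.point D) (mu : 'I_D -> R).

Definition bern_except x mu (i : 'I_D) : R :=
  \prod_(j < D | j != i) (if x j then mu j else 1 - mu j).

Definition dbern x mu (i : 'I_D) : R := (if x i then 1 else -1) * bern_except x mu i.

Lemma bern_bigD1 x mu i : bern x mu = (if x i then mu i else 1 - mu i) * bern_except x mu i.
Proof. by rewrite /bern (bigD1 i). Qed.

Lemma setc_id mu i : setc mu i (mu i) = mu.
Proof. by apply/funext => j; rewrite /setc; case: eqP => // ->. Qed.

Lemma bern_setc x mu i t :
  bern x (setc mu i t) = dbern x mu i * t + (if x i then 0 else bern_except x mu i).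
Proof.
rewrite (bern_bigD1 _ _ i) /dbern.
have -> : bern_except x (setc mu i t) i = bern_except x mu i.
  by apply: eq_bigr => j /negbTE hj; rewrite /setc hj.
by rewrite /setc eqxx; case: (x i); ring.
Qed.

Lemma sum_point_prod (F : 'I_D -> bool -> R) :
  \sum_(x : Defs.point D) \prod_i F i (x i) = \prod_i (F i true + F i false).
Proof. by rewrite -(bigA_distr_bigA F); apply: eq_bigr => i _; rewrite big_bool. Qed.

Lemma sum_bern mu : \sum_(x : Defs.point D) bern x mu = 1.
Proof.
rewrite (sum_point_prod (fun i b => if b then mu i else 1 - mu i)).
by apply: big1 => i _; rewrite addrC subrK.
Qed.

Lemma sum_bern_mulx mu i : \sum_(x : Defs.point D) bern x mu * (x i)%:R = mu i.
Proof.
pose F j (b : bool) := (if b then mu j else 1 - mu j) * (if j == i then b%:R else 1).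
have -> : \sum_(x : Defs.point D) bern x mu * (x i)%:R = \sum_(x : Defs.point D) \prod_j F j (x j).
  apply: eq_bigr => x _; rewrite big_split /= -big_mkcond /=.
  by rewrite big_pred1_eq.
rewrite sum_point_prod (bigD1 i) //= big1 => [|j /negbTE ji].
  by rewrite /F eqxx mulr1 mulr0 addr0 mulr1.
by rewrite /F ji !mulr1 addrC subrK.
Qed.

Lemma bern_gt0 x mu : (forall j, 0 < mu j < 1) -> 0 < bern x mu.
Proof. by move=> hmu; apply: prodr_gt0 => j _; case: (x j); have := hmu j; lra. Qed.

Lemma bern_except_gt0 x mu i : (forall j, 0 < mu j < 1) -> 0 < bern_except x mu i.
Proof. by move=> hmu; apply: prodr_gt0 => j _; case: (x j); have := hmu j; lra. Qed.

Lemma sum_bern_ratio (a m n : 'I_D -> R) :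
  \sum_(x : Defs.point D) bern x a * bern x m / bern x n =
  \prod_j (a j * m j / n j + (1 - a j) * (1 - m j) / (1 - n j)).
Proof.
rewrite -(sum_point_prod (fun j b => (if b then a j else 1 - a j) *
  (if b then m j else 1 - m j) / (if b then n j else 1 - n j))).
by apply: eq_bigr => x _; rewrite /bern -prodfV -!big_split.
Qed.

Section Continuity.
Context (T : Type) (F : set_system T) {FF : Filter F}.
Variables (f : T -> 'I_D -> R) (mu : 'I_D -> R).
Hypothesis cvg_f : forall i, f^~ i @ F --> mu i.

Lemma cvg_bern_factor x i :
  (fun s => if x i then f s i else 1 - f s i) @ F --> (if x i then mu i else 1 - mu i).
Proof. by case: (x i); [exact: @cvg_f | exact (cvgB (cvg_cst (1 : R)) (@cvg_f i))]. Qed.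

Lemma cvg_bern x : (fun s => bern x (f s)) @ F --> bern x mu.
Proof. apply: (@cvg_big _ _ _ _ _ mul_continuous) => j _; exact: cvg_bern_factor. Qed.

Lemma cvg_dbern x i : (fun s => dbern x (f s) i) @ F --> dbern x mu i.
Proof.
apply: cvgM (cvg_cst _) _.
apply: (@cvg_big _ _ _ _ _ mul_continuous) => j _; exact: cvg_bern_factor.
Qed.

End Continuity.
End Bernoulli.

Lemma proj_simplex1_eq0 (R : realType) (a b : R) : a - b + 1 <= 0 -> proj_simplex1 a b = 0.
Proof. by move=> h; rewrite /proj_simplex1 min_r ?max_l //; lra. Qed.

Ltac field_neq0 := repeat (apply/andP; split); apply/eqP => ?; lra.

Section Gradient.
Variables (R : realType) (D : nat) (pis : R) (mu1s mu2s : 'I_D -> R).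
Local Notation pst := (pstar pis mu1s mu2s).
Local Notation xb := (xbar pis mu1s mu2s).
Implicit Types (s : state R D) (x : Defs.point D) (m y : 'I_D -> R).

Definition pmix s x : R := pmodel s.1.1 (1 - s.1.1) s.1.2 s.2 x.

Definition grad_pi1 s : R := \sum_x pst x * (bern x s.1.2 / pmix s x).
Definition grad_pi2 s : R := \sum_x pst x * (bern x s.2 / pmix s x).
Definition grad_mu1 s i : R := \sum_x pst x * (s.1.1 * dbern x s.1.2 i / pmix s x).
Definition grad_mu2 s i : R := \sum_x pst x * ((1 - s.1.1) * dbern x s.2 i / pmix s x).

Definition gd_step_grad (al : R) s : state R D :=
  (proj_simplex1 (s.1.1 + al * grad_pi1 s) (1 - s.1.1 + al * grad_pi2 s),
   fun i => s.1.2 i + al * grad_mu1 s i, fun i => s.2 i + al * grad_mu2 s i).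

Lemma gd_stepE al s : (forall x, 0 < pmix s x) ->
  gd_step pis mu1s mu2s al s = gd_step_grad al s.
Proof.
case: s => [[p m1] m2] /= hpos; rewrite /gd_step /loglik /gd_step_grad /=.
rewrite (@derive1_sum_scale_ln_affine _ _ pst (fun x => bern x m1) (fun x => (1 - p) * bern x m2)
  (fun x t => pmodel t (1 - p) m1 m2 x)) //; last by move=> x t; rewrite /pmodel; ring.
rewrite (@derive1_sum_scale_ln_affine _ _ pst (fun x => bern x m2) (fun x => p * bern x m1)
  (fun x t => pmodel p t m1 m2 x)) //; last by move=> x t; rewrite /pmodel; ring.
congr (_, _, _); apply/funext => i.
- rewrite (@derive1_sum_scale_ln_affine _ _ pst (fun x => p * dbern x m1 i)
    (fun x => p * (if x i then 0 else bern_except x m1 i) + (1 - p) * bern x m2)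
    (fun x t => pmodel p (1 - p) (setc m1 i t) m2 x)) ?setc_id //.
  by move=> x t; rewrite /pmodel bern_setc; ring.
- rewrite (@derive1_sum_scale_ln_affine _ _ pst (fun x => (1 - p) * dbern x m2 i)
    (fun x => (1 - p) * (if x i then 0 else bern_except x m2 i) + p * bern x m1)
    (fun x t => pmodel p (1 - p) m1 (setc m2 i t) x)) ?setc_id //.
  by move=> x t; rewrite /pmodel bern_setc; ring.
Qed.

Lemma sum_pstar : \sum_x pst x = 1.
Proof. by rewrite /pstar big_split /= -!mulr_sumr !sum_bern; ring. Qed.

Lemma xbarE i : xb i = pis * mu1s i + (1 - pis) * mu2s i.
Proof.
rewrite /xbar -!sum_bern_mulx !mulr_sumr -big_split /=.
by apply: eq_bigr => x _; rewrite /pstar; ring.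
Qed.

Lemma pmix_face m y x : pmix (0, m, y) x = bern x y.
Proof. by rewrite /pmix /pmodel /= mul0r add0r subr0 mul1r. Qed.

Lemma grad_mu1_face m y i : grad_mu1 (0, m, y) i = 0.
Proof. by rewrite /grad_mu1 big1 // => x _; rewrite /= !mul0r mulr0. Qed.

Lemma grad_pi2_face m y : (forall j, 0 < y j < 1) -> grad_pi2 (0, m, y) = 1.
Proof.
move=> hy; rewrite /grad_pi2 -[RHS]sum_pstar; apply: eq_bigr => x _.
by rewrite pmix_face divff ?mulr1 // gt_eqF // bern_gt0.
Qed.

Lemma grad_mu2_face m y i : (forall j, 0 < y j < 1) ->
  grad_mu2 (0, m, y) i = (xb i - y i) / (y i * (1 - y i)).
Proof.
move=> hy; have /andP [y0 y1] := hy i.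
have term x : pst x * ((1 - 0) * dbern x y i / pmix (0, m, y) x)
    = - (1 - y i)^-1 * pst x + ((y i)^-1 + (1 - y i)^-1) * (pst x * (x i)%:R).
  have := bern_except_gt0 x i hy.
  rewrite pmix_face subr0 mul1r /dbern (bern_bigD1 x y i).
  by case: (x i) => /= hP; [rewrite mulr1 | rewrite mulr0]; field; field_neq0.
rewrite /grad_mu2 (eq_bigr _ (fun x _ => term x)) big_split /= -!mulr_sumr sum_pstar.
by rewrite -/(xb i); field; field_neq0.
Qed.

Lemma grad_pi1_face_xbar m : (forall j, 0 < xb j < 1) ->
  grad_pi1 (0, m, xb) = Z1lam pis (lambda pis mu1s mu2s m).
Proof.
move=> hxb.
rewrite /grad_pi1 (eq_bigr (fun x => pis * (bern x mu1s * bern x m / bern x xb) +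
    (1 - pis) * (bern x mu2s * bern x m / bern x xb))); last first.
  by move=> x _; rewrite pmix_face /pstar; ring.
rewrite big_split /= -!mulr_sumr !sum_bern_ratio.
rewrite /Z1lam; congr (_ * _ + _ * _); apply: eq_bigr => j _.
all: rewrite /lambda /Svar /mustar; have := hxb j; rewrite xbarE => /andP [? ?].
all: by field; field_neq0.
Qed.

End Gradient.

Section BoxFilter.
Variables (R : realType) (D : nat) (c : state R D).

(* Sup-norm neighbourhoods of [c], the form in which the theorem measures closeness. *)
Definition box (r : R) (s : state R D) : Prop :=
  [/\ `|s.1.1 - c.1.1| < r, forall i, `|s.1.2 i - c.1.2 i| < r
    & forall i, `|s.2 i - c.2 i| < r].

Definition box_nbhs : set_system (state R D) := filter_from [set r | 0 < r] box.

Lemma box_le r r' s : r <= r' -> box r s -> box r' s.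
Proof.
move=> le_rr' [h1 h2 h3]; split=> [|i|i]; apply: lt_le_trans le_rr' => //.
Qed.

Global Instance box_nbhs_filter : Filter box_nbhs.
Proof.
apply: filter_from_filter; first by exists 1; rewrite /= ltr01.
move=> r r' r0 r'0; exists (Num.min r r'); first by rewrite /= lt_min r0 r'0.
by move=> s hs; split; apply: box_le hs; rewrite ge_min lexx ?orbT.
Qed.

Lemma cvg_box_pi1 : (fun s => s.1.1) @ box_nbhs --> c.1.1.
Proof. by apply/cvgrPdist_lt => e e0; exists e => // s [h _ _]; rewrite /= distrC. Qed.

Lemma cvg_box_mu1 i : (fun s => s.1.2 i) @ box_nbhs --> c.1.2 i.
Proof. by apply/cvgrPdist_lt => e e0; exists e => // s [_ h _]; rewrite /= distrC. Qed.

Lemma cvg_box_mu2 i : (fun s => s.2 i) @ box_nbhs --> c.2 i.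
Proof. by apply/cvgrPdist_lt => e e0; exists e => // s [_ _ h]; rewrite /= distrC. Qed.

End BoxFilter.

Section GradientContinuity.
Variables (R : realType) (D : nat) (pis : R) (mu1s mu2s : 'I_D -> R) (c : state R D).
Hypothesis pmix_c_neq0 : forall x, pmix c x != 0.
Local Notation pst := (pstar pis mu1s mu2s).
Local Notation F := (box_nbhs c).

Lemma cvg_pmix x : (fun s => pmix s x) @ F --> pmix c x.
Proof.
rewrite /pmix /pmodel.
exact (cvgD (cvgM (cvg_box_pi1 (c:=c)) (cvg_bern (x:=x) (cvg_box_mu1 (c:=c))))
            (cvgM (cvgB (cvg_cst (1 : R)) (cvg_box_pi1 (c:=c)))
                  (cvg_bern (x:=x) (cvg_box_mu2 (c:=c))))).
Qed.

Lemma cvg_sum_ratio (num : Defs.point D -> state R D -> R) (l : Defs.point D -> R) :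
  (forall x, num x @ F --> l x) ->
  (fun s => \sum_x pst x * (num x s / pmix s x)) @ F --> \sum_x pst x * (l x / pmix c x).
Proof.
move=> cvg_num; apply: (@cvg_big _ _ _ _ _ add_continuous) => x _.
exact (cvgM (cvg_cst _) (cvgM (@cvg_num x) (cvgV (pmix_c_neq0 x) (cvg_pmix (x:=x))))).
Qed.

Lemma cvg_grad_pi1 : grad_pi1 pis mu1s mu2s @ F --> grad_pi1 pis mu1s mu2s c.
Proof. by apply: cvg_sum_ratio => x; apply: cvg_bern; apply: cvg_box_mu1. Qed.

Lemma cvg_grad_pi2 : grad_pi2 pis mu1s mu2s @ F --> grad_pi2 pis mu1s mu2s c.
Proof. by apply: cvg_sum_ratio => x; apply: cvg_bern; apply: cvg_box_mu2. Qed.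

Lemma cvg_grad_mu1 i : grad_mu1 pis mu1s mu2s ^~ i @ F --> grad_mu1 pis mu1s mu2s c i.
Proof.
apply: cvg_sum_ratio => x.
exact: cvgM (cvg_box_pi1 (c:=c)) (cvg_dbern (x:=x) (i:=i) (cvg_box_mu1 (c:=c))).
Qed.

Lemma cvg_grad_mu2 i : grad_mu2 pis mu1s mu2s ^~ i @ F --> grad_mu2 pis mu1s mu2s c i.
Proof.
apply: cvg_sum_ratio => x.
exact: cvgM (cvgB (cvg_cst (1 : R)) (cvg_box_pi1 (c:=c)))
            (cvg_dbern (x:=x) (i:=i) (cvg_box_mu2 (c:=c))).
Qed.

End GradientContinuity.

Section RealFacts.
Variable R : realType.

Lemma var_le_quarter (y : R) : y * (1 - y) <= 4^-1.
Proof. by have := sqr_ge0 (2 * y - 1); rewrite expr2; nra. Qed.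

Lemma contraction_factor_range (al y : R) : 0 < al -> al < y * (1 - y) ->
  0 <= 1 - 4 * al < 1.
Proof. by move=> al_gt0 al_lt; have := var_le_quarter y; rewrite subr_ge0; lra. Qed.

Lemma in01_of_var_gt (al y : R) : 0 < al -> al < y * (1 - y) -> 0 < y < 1.
Proof. by move=> al_gt0 al_lt; apply/andP; split; nra. Qed.

Lemma scaled_step_contract (al c y : R) : 0 < al -> al < y * (1 - y) ->
  `|y + al * ((c - y) / (y * (1 - y))) - c| <= (1 - 4 * al) * `|y - c|.
Proof.
set v := y * (1 - y) => al_gt0 al_lt_v.
have v_gt0 : 0 < v by lra.
have := var_le_quarter y; rewrite -/v => v_le.
have -> : y + al * ((c - y) / v) - c = (1 - al / v) * (y - c).
  by field; rewrite gt_eqF.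
(* As v <= 1/4, the factor 1 - al / v lies in [0, 1 - 4 al]. *)
have kv : al / v * v = al by rewrite divfK ?gt_eqF.
have k_gt0 : 0 < al / v by rewrite divr_gt0.
rewrite normrM ger0_norm ?ler_wpM2r //; nra.
Qed.

Lemma exists_pos_lt_all (I : finType) (v : I -> R) :
  (forall i, 0 < v i) -> exists2 e, 0 < e & forall i, e < v i.
Proof.
move=> v_gt0.
have [e [e_gt0 e_lt]] : exists e, 0 < e /\ forall i, e < v i.
  apply: (@filter_ex _ (0 : R)^'+).
  near=> e; split; first by near: e; exact: nbhs_right_gt.
  by near: e; apply: filter_forall => i; exact: nbhs_right_lt.
by exists e.
Unshelve. all: by end_near.
Qed.

Lemma cvg_geometric_bound (u : R^nat) (l q C : R) : 0 <= q < 1 ->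
  (forall n, `|u n - l| <= q ^+ n * C) -> u @ \oo --> l.
Proof.
move=> /andP [q_ge0 q_lt1] u_bound; apply/subr_cvg0/norm_cvg0P.
have q_pow : (fun n => q ^+ n * C) @ \oo --> 0 * C.
  by apply: cvgM (cvg_cst C); apply: cvg_expr; rewrite ger0_norm.
rewrite mul0r in q_pow; apply: squeeze_cvgr (cvg_cst 0) q_pow.
by apply: nearW => n; rewrite normr_ge0 u_bound.
Qed.

End RealFacts.

Lemma cvg_shiftS_eq (T : ptopologicalType) (u v : nat -> T) (l : T) :
  (forall n, u n.+1 = v n) -> v @ \oo --> l -> u @ \oo --> l.
Proof. by move=> uv vl; rewrite -cvg_shiftS; under eq_cvg do rewrite /= uv. Qed.

Section Attraction.
Variables (R : realType) (D : nat) (pis : R) (mu1s mu2s mu10 : 'I_D -> R).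
Hypotheses (hpis : 0 < pis < 1)
  (hmu1s : forall i, 0 <= mu1s i <= 1) (hmu2s : forall i, 0 <= mu2s i <= 1)
  (hsigma : forall i j : 'I_D, i != j ->
     4 * pis * (1 - pis) * mustar mu1s mu2s i * mustar mu1s mu2s j != 0)
  (hT : Z1lam pis (lambda pis mu1s mu2s mu10) < 1).

Local Notation xb := (xbar pis mu1s mu2s).
Local Notation s0 := ((0 : R), mu10, xb).

Lemma mustar_neq0 i : mustar mu1s mu2s i != 0.
Proof.
apply/eqP => mui0.
have lam0 j : lambda pis mu1s mu2s mu10 j = 0.
  have [->|ji] := eqVneq j i; first by rewrite /lambda mui0 mulr0 mul0r.
  by move: (hsigma ji); rewrite mui0 mulr0 eqxx.
move: hT; rewrite /Z1lam !big1 => [|j _|j _]; rewrite ?lam0; lra.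
Qed.

Lemma xbar_in01 i : 0 < xb i < 1.
Proof.
have : mu1s i != mu2s i.
  by apply: contra_neq (mustar_neq0 i) => e; rewrite /mustar e subrr mul0r.
rewrite xbarE; move: (hmu1s i) (hmu2s i) hpis => /andP [? ?] /andP [? ?] /andP [? ?].
by case/lt_total/orP => ?; apply/andP; split; nra.
Qed.

Lemma pmix_s0_gt0 x : 0 < pmix s0 x.
Proof. by rewrite pmix_face bern_gt0 //; exact: xbar_in01. Qed.

Lemma pmix_s0_neq0 x : pmix s0 x != 0.
Proof. by rewrite gt_eqF ?pmix_s0_gt0. Qed.

Lemma grad_pi_gap_s0 : grad_pi1 pis mu1s mu2s s0 < grad_pi2 pis mu1s mu2s s0.
Proof. by rewrite grad_pi1_face_xbar ?grad_pi2_face //; exact: xbar_in01. Qed.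

Section StepSize.
Variable al : R.
Hypotheses (al_gt0 : 0 < al) (al_lt_var : forall i, al < xb i * (1 - xb i)).

Definition face_step (s : state R D) : state R D :=
  (0, fun i => s.1.2 i + al * grad_mu1 pis mu1s mu2s s i,
      fun i => s.2 i + al * grad_mu2 pis mu1s mu2s s i).

Lemma near_s0_gd_step : \forall s \near box_nbhs s0,
  gd_step pis mu1s mu2s al s = face_step s /\ forall i, al < s.2 i * (1 - s.2 i).
Proof.
have near_pos : \forall s \near box_nbhs s0, forall x, 0 < pmix s x.
  by apply: filter_forall => x; apply: (cvgr_gt _ (cvg_pmix (x:=x))); exact: pmix_s0_gt0.
have near_gap : \forall s \near box_nbhs s0,
    s.1.1 * 2 + al * grad_pi1 pis mu1s mu2s s - al * grad_pi2 pis mu1s mu2s s < 0.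
  have lim : (fun s => s.1.1 * 2 + al * grad_pi1 pis mu1s mu2s s - al * grad_pi2 pis mu1s mu2s s)
      @ box_nbhs s0 --> 0 * 2 + al * grad_pi1 pis mu1s mu2s s0 - al * grad_pi2 pis mu1s mu2s s0.
    exact (cvgB (cvgD (cvgM (cvg_box_pi1 (c:=s0)) (cvg_cst (2 : R)))
                      (cvgM (cvg_cst (al : R)) (cvg_grad_pi1 pmix_s0_neq0)))
                (cvgM (cvg_cst (al : R)) (cvg_grad_pi2 pmix_s0_neq0))).
  apply: (cvgr_lt _ lim).
  by rewrite mul0r add0r -mulrBr pmulr_rlt0 // subr_lt0 grad_pi_gap_s0.
have near_var : \forall s \near box_nbhs s0, forall i, al < s.2 i * (1 - s.2 i).
  apply: filter_forall => i.
  have lim : (fun s => s.2 i * (1 - s.2 i)) @ box_nbhs s0 --> xb i * (1 - xb i).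
    exact (cvgM (cvg_box_mu2 (c:=s0) (i:=i)) (cvgB (cvg_cst (1 : R)) (cvg_box_mu2 (i:=i)))).
  exact: cvgr_gt lim _ (al_lt_var i).
near=> s; split; last by near: s.
rewrite gd_stepE; last by near: s.
rewrite /gd_step_grad /face_step; congr (_, _, _); apply: proj_simplex1_eq0.
suff : s.1.1 * 2 + al * grad_pi1 pis mu1s mu2s s - al * grad_pi2 pis mu1s mu2s s < 0 by lra.
by near: s.
Unshelve. all: by end_near.
Qed.

Lemma face_step_face m y : (forall j, 0 < y j < 1) ->
  face_step (0, m, y) = (0, m, fun i => y i + al * ((xb i - y i) / (y i * (1 - y i)))).
Proof.
move=> y01; rewrite /face_step; congr (_, _, _); apply/funext => i.
  by rewrite grad_mu1_face mulr0 addr0.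
by rewrite grad_mu2_face.
Qed.

Lemma face_step_s0 : face_step s0 = s0.
Proof.
rewrite face_step_face; last exact: xbar_in01.
by congr (_, _, _); apply/funext => i; rewrite subrr mul0r mulr0 addr0.
Qed.

Lemma near_s0_face_step_box r : 0 < r -> \forall s \near box_nbhs s0, box s0 r (face_step s).
Proof.
move=> r_gt0.
have lim1 i : (fun s => (face_step s).1.2 i) @ box_nbhs s0 --> (face_step s0).1.2 i.
  exact (cvgD (cvg_box_mu1 (i:=i)) (cvgM (cvg_cst (al : R)) (cvg_grad_mu1 (i:=i) pmix_s0_neq0))).
have lim2 i : (fun s => (face_step s).2 i) @ box_nbhs s0 --> (face_step s0).2 i.
  exact (cvgD (cvg_box_mu2 (i:=i)) (cvgM (cvg_cst (al : R)) (cvg_grad_mu2 (i:=i) pmix_s0_neq0))).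
rewrite face_step_s0 /= in lim1 lim2.
have near1 : \forall s \near box_nbhs s0, forall i, `|(face_step s).1.2 i - mu10 i| < r.
  apply: filter_forall => i; move/cvgrPdist_lt: (lim1 i) => /(_ r r_gt0).
  by apply: filterS => s; rewrite distrC.
have near2 : \forall s \near box_nbhs s0, forall i, `|(face_step s).2 i - xb i| < r.
  apply: filter_forall => i; move/cvgrPdist_lt: (lim2 i) => /(_ r r_gt0).
  by apply: filterS => s; rewrite distrC.
near=> s; split; [by rewrite /= subrr normr0 | near: s | near: s]; assumption.
Unshelve. all: by end_near.
Qed.

Section Face.
Variable r : R.
Hypothesis box_step : forall s, box s0 r s ->
  gd_step pis mu1s mu2s al s = face_step s /\ forall i, al < s.2 i * (1 - s.2 i).

Lemma gd_iter_face m y n : box s0 r (0, m, y) ->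
  (gd_iter pis mu1s mu2s al n (0, m, y)).1 = (0, m) /\
  forall i, `|(gd_iter pis mu1s mu2s al n (0, m, y)).2 i - xb i|
              <= (1 - 4 * al) ^+ n * `|y i - xb i|.
Proof.
move=> box0; elim: n => [|n]; first by split=> // i; rewrite expr0 mul1r.
rewrite /gd_iter iterS; case: (iter n _ _) => [[p m'] y'] [[-> ->] dist_n].
have box_n : box s0 r (0, m, y').
  case: box0 => h1 h2 h3; split=> // i; apply: le_lt_trans (h3 i).
  have /andP [q_ge0 q_lt1] := contraction_factor_range al_gt0 (al_lt_var i).
  by apply: le_trans (dist_n i) _; rewrite ler_piMl // exprn_ile1 // ltW.
have [-> var_n] := box_step box_n.
rewrite face_step_face => [|j]; last exact: in01_of_var_gt al_gt0 (var_n j).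
split=> // i; apply: le_trans (scaled_step_contract _ al_gt0 (var_n i)) _.
have /andP [q_ge0 _] := contraction_factor_range al_gt0 (var_n i).
by rewrite exprS -mulrA ler_wpM2l.
Qed.

Lemma gd_iter_face_cvg m y : box s0 r (0, m, y) ->
  [/\ (fun n => (gd_iter pis mu1s mu2s al n (0, m, y)).1.1) @ \oo --> (0 : R),
      forall i, (fun n => (gd_iter pis mu1s mu2s al n (0, m, y)).1.2 i) @ \oo --> m i
    & forall i, (fun n => (gd_iter pis mu1s mu2s al n (0, m, y)).2 i) @ \oo --> xb i].
Proof.
move=> box0; have iter_face n := (gd_iter_face n box0).
split=> [|i|i].
- by apply: cvg_near_cst; apply: nearW => n; rewrite (iter_face n).1.
- by apply: cvg_near_cst; apply: nearW => n; rewrite (iter_face n).1.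
apply: (cvg_geometric_bound _ (fun n => (iter_face n).2 i)).
exact: contraction_factor_range al_gt0 (al_lt_var i).
Qed.

End Face.

Lemma gd_attracts : exists2 delta, 0 < delta & forall pi1 mu1 mu2,
  0 <= pi1 < delta -> (forall i, `|mu1 i - mu10 i| < delta) ->
  (forall i, `|mu2 i - xb i| < delta) ->
  exists mu1inf mu2inf : 'I_D -> R,
    [/\ (fun n => (gd_iter pis mu1s mu2s al n (pi1, mu1, mu2)).1.1) @ \oo --> (0 : R),
        forall i, (fun n => (gd_iter pis mu1s mu2s al n (pi1, mu1, mu2)).1.2 i) @ \oo --> mu1inf i
      & forall i, (fun n => (gd_iter pis mu1s mu2s al n (pi1, mu1, mu2)).2 i) @ \oo --> mu2inf i].
Proof.
have [r r_gt0 box_step] := near_s0_gd_step.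
have near_box := near_s0_face_step_box r_gt0.
have [delta delta_gt0 start] := filterI near_s0_gd_step near_box.
exists delta => // p1 m1 m2 /andP [p1_ge0 p1_lt] m1_near m2_near.
have box_start : box s0 delta (p1, m1, m2) by split=> //=; rewrite subr0 ger0_norm.
have [[step_eq _] box1] := start _ box_start.
have iter_shift n : gd_iter pis mu1s mu2s al n.+1 (p1, m1, m2) =
    gd_iter pis mu1s mu2s al n (face_step (p1, m1, m2)).
  by rewrite /gd_iter iterSr step_eq.
have [lim_pi1 lim_mu1 lim_mu2] := gd_iter_face_cvg box_step box1.
exists (face_step (p1, m1, m2)).1.2, xb.
split=> [|i|i]; [apply: cvg_shiftS_eq lim_pi1 | apply: cvg_shiftS_eq (lim_mu1 i)
  | apply: cvg_shiftS_eq (lim_mu2 i)] => n; by rewrite iter_shift.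
Qed.

End StepSize.
End Attraction.

Theorem mainTheorem4 (R : realType) (D : nat)
    (pis : R) (mu1s mu2s : 'I_D -> R)
    (hpis : 0 < pis < 1)
    (hmu1s : forall i, 0 <= mu1s i <= 1)
    (hmu2s : forall i, 0 <= mu2s i <= 1)
    (hsigma : forall i j : 'I_D, i != j ->
        4 * pis * (1 - pis) * mustar mu1s mu2s i * mustar mu1s mu2s j != 0)
    (mu10 : 'I_D -> R)
    (hmu10 : forall i, 0 <= mu10 i <= 1)
    (hT : Z1lam pis (lambda pis mu1s mu2s mu10) < 1) :
  exists2 alpha0 : R, 0 < alpha0 &
  forall alpha : R, 0 < alpha <= alpha0 ->
  exists2 delta : R, 0 < delta &
  forall (pi1 : R) (mu1 mu2 : 'I_D -> R),
    0 <= pi1 < delta ->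
    (forall i, 0 <= mu1 i <= 1) -> (forall i, 0 <= mu2 i <= 1) ->
    (forall i, `|mu1 i - mu10 i| < delta) ->
    (forall i, `|mu2 i - xbar pis mu1s mu2s i| < delta) ->
    exists mu1inf mu2inf : 'I_D -> R,
      [/\ (fun n => (gd_iter pis mu1s mu2s alpha n (pi1, mu1, mu2)).1.1) @ \oo --> (0 : R),
          forall i, (fun n => (gd_iter pis mu1s mu2s alpha n (pi1, mu1, mu2)).1.2 i) @ \oo --> mu1inf i
        & forall i, (fun n => (gd_iter pis mu1s mu2s alpha n (pi1, mu1, mu2)).2 i) @ \oo --> mu2inf i].
Proof.
have xbar01 := xbar_in01 hpis hmu1s hmu2s hsigma hT.
have var_gt0 i : 0 < xbar pis mu1s mu2s i * (1 - xbar pis mu1s mu2s i).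
  by have /andP [? ?] := xbar01 i; rewrite mulr_gt0 ?subr_gt0.
have [alpha0 alpha0_gt0 alpha0_lt] := exists_pos_lt_all var_gt0.
exists alpha0 => // alpha /andP [alpha_gt0 alpha_le].
have alpha_lt i := le_lt_trans alpha_le (alpha0_lt i).
have [delta delta_gt0 attract] := gd_attracts hpis hmu1s hmu2s hsigma hT alpha_gt0 alpha_lt.
by exists delta => // pi1 mu1 mu2 pi1_small _ _; exact: attract.
Qed.
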